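(* Let $\mathbb{A}$ be the Fraïssé limit of the class $\mathscr{C}$ of all totally ordered structures from a free amalgamation class $\mathscr{C}_0$ of finite irreflexive $\sigma_0$-structures (with $\sigma_0$ finite, unary and binary relations only). Let $X, Y, \{z\}\subseteq\mathbb{A}$ be pairwise disjoint finite sets. Then there is $\tau\in\operatorname{Aut}(\mathbb{A})$ such that (1) $\tau(x)=x$ for all $x\in X$; (2) $\tau(z)$ is unrelated to every $y\in Y$ and to $z$; (3) $\tau(z)>z$.
   Context: Two elements $u,v$ are related if $u=v$ or $R(u,v)$ or $R(v,u)$ holds for some binary $R\in\sigma_0$. A free amalgamation class is a class $\operatorname{Forb}(\mathscr{F})$ of all finite $\sigma_0$-structures embedding no member of $\mathscr{F}$, where in each member of $\mathscr{F}$ every two elements are related. Irreflexive: each binary relation holds only between distinct elements. $\mathscr{C}$ consists of all $(\sigma_0\uplus\{<\})$-structures obtained from members of $\mathscr{C}_0$ by interpreting $<$ as any total order; $\mathbb{A}$ is its Fraïssé limit (the countable homogeneous structure with age $\mathscr{C}$). *)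

From mathcomp Require Import all_boot.
From Stdlib Require List.

Set Implicit Arguments.
Unset Strict Implicit.
Unset Printing Implicit Defensive.

Section Structures.
(* The finite relational signature sigma_0: U = unary symbols, B = binary symbols. *)
Variables (U B : finType).

Record sstr := SStr {
  scar :> Type;
  sun : U -> scar -> Prop;
  sbin : B -> scar -> scar -> Prop }.

Record ostr := OStr {
  ored :> sstr;
  olt : ored -> ored -> Prop }.

Definition finite_type (T : Type) : Prop :=
  exists l : list T, forall x : T, List.In x l.

Definition countable_type (T : Type) : Prop :=
  exists f : T -> nat, injective f.

Definition sembedding (S T : sstr) (f : S -> T) : Prop :=
  injective f /\
  (forall (u : U) (x : S), sun u x <-> sun u (f x)) /\
  (forall (r : B) (x y : S), sbin r x y <-> sbin r (f x) (f y)).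

Definition sembeds (S T : sstr) : Prop := exists f : S -> T, sembedding f.

Definition oembedding (S T : ostr) (f : S -> T) : Prop :=
  sembedding (S := S) (T := T) f /\
  (forall x y : S, olt x y <-> olt (f x) (f y)).

Definition oembeds (S T : ostr) : Prop := exists f : S -> T, oembedding f.

Definition related (S : sstr) (u v : S) : Prop :=
  u = v \/ exists r : B, sbin r u v \/ sbin r v u.

Definition irreflexive_str (S : sstr) : Prop :=
  forall (r : B) (x : S), ~ sbin r x x.

Definition Forb (F : sstr -> Prop) (S : sstr) : Prop :=
  finite_type S /\ forall G : sstr, F G -> ~ sembeds G S.

Definition strict_total_order (T : Type) (lt : T -> T -> Prop) : Prop :=
  (forall x, ~ lt x x) /\
  (forall x y z, lt x y -> lt y z -> lt x z) /\
  (forall x y, x <> y -> lt x y \/ lt y x).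

(* the class C: members of C_0 = Forb(F) expanded by an arbitrary total order *)
Definition classC (F : sstr -> Prop) (S : ostr) : Prop :=
  Forb F S /\ strict_total_order (@olt S).

Definition automorphism (A : ostr) (t : A -> A) : Prop :=
  bijective t /\ oembedding (S := A) (T := A) t.

Definition homogeneous (A : ostr) : Prop :=
  forall (D : list A) (g : A -> A),
    (forall x y, List.In x D -> List.In y D -> g x = g y -> x = y) ->
    (forall u x, List.In x D -> (sun u x <-> sun u (g x))) ->
    (forall r x y, List.In x D -> List.In y D ->
        (sbin r x y <-> sbin r (g x) (g y))) ->
    (forall x y, List.In x D -> List.In y D -> (olt x y <-> olt (g x) (g y))) ->
    exists t : A -> A, automorphism t /\ forall x, List.In x D -> t x = g x.

Definition age_is (F : sstr -> Prop) (A : ostr) : Prop :=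
  forall S : ostr, classC F S <-> (finite_type S /\ oembeds S A).

Definition fraisse_limit (F : sstr -> Prop) (A : ostr) : Prop :=
  countable_type A /\ homogeneous A /\ age_is F A.

End Structures.

From mathcomp Require Import all_boot.
From Stdlib Require List.
From Stdlib Require Import ClassicalEpsilon ProofIrrelevance.

(** Let [D] consist of [z], [X] and [Y].  Extend [D] by a copy [z'] of [z] that is
    related only to the points of [X] (exactly as [z] is) and sits immediately
    above [z] in the order.  Since [z] and [z'] are unrelated, a fully related
    forbidden structure cannot use both of them, so the extension is again in
    the class; it therefore embeds into [A], and homogeneity moves that embedding
    so that it fixes [D].  The image [w] of [z'] is unrelated to [Y] and to [z],
    lies above [z], and has the same type over [X] as [z]: a second use of
    homogeneity maps [z] to [w] while fixing [X]. *)

Set Implicit Arguments.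
Unset Strict Implicit.
Unset Printing Implicit Defensive.

Section Embeddings.
Variables (U B : finType).

Lemma sval_inj (T : Type) (P : T -> Prop) : injective (@proj1_sig T P).
Proof. exact: eq_sig_hprop (fun x => proof_irrelevance (P x)). Qed.

Lemma oembedding_comp (R S T : ostr U B) (f : R -> S) (g : S -> T) :
  oembedding f -> oembedding g -> oembedding (g \o f).
Proof.
move=> [[finj [fun_ fbin]] flt] [[ginj [gun gbin]] glt].
split; [split; [exact: inj_comp | split] |] => * /=.
- by rewrite fun_ gun.
- by rewrite fbin gbin.
- by rewrite flt glt.
Qed.

Lemma sembedding_related (S T : sstr U B) (f : S -> T) (u v : S) :
  sembedding f -> related (f u) (f v) -> related u v.
Proof.
move=> [finj [_ fbin]] [/finj -> | [r Hr]]; first by left.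
by right; exists r; rewrite !fbin.
Qed.

Lemma automorphism_inv (A : ostr U B) (t t' : A -> A) :
  automorphism t -> cancel t' t -> oembedding t'.
Proof.
move=> [_ [[_ [tun tbin]] tlt]] tK.
split; [split; [exact: can_inj tK | split] |] => *.
- by rewrite (tun _ (t' _)) tK.
- by rewrite (tbin _ (t' _)) !tK.
- by rewrite (tlt (t' _)) !tK.
Qed.

Definition subS (T : ostr U B) (P : T -> Prop) : ostr U B :=
  @OStr U B (@SStr U B {a : T | P a}
     (fun u x => sun u (proj1_sig x)) (fun r x y => sbin r (proj1_sig x) (proj1_sig y)))
   (fun x y => olt (proj1_sig x) (proj1_sig y)).

Lemma oembedding_sval (T : ostr U B) (P : T -> Prop) :
  oembedding (@proj1_sig T P : subS P -> T).
Proof. by split; [split; [exact: sval_inj | split] |]. Qed.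

Lemma oembedding_subS_incl (T : ostr U B) (P Q : T -> Prop) (PQ : forall a, P a -> Q a) :
  oembedding (fun a : subS P => exist Q (proj1_sig a) (PQ _ (proj2_sig a)) : subS Q).
Proof.
split; [split; [|split] |] => //.
by move=> a b [] /sval_inj.
Qed.

Lemma finite_In_sig (T : Type) (L : list T) : finite_type {a : T | List.In a L}.
Proof.
pose pt a := if excluded_middle_informative (List.In a L) is left p
             then cons (exist (fun a => List.In a L) a p) nil else nil.
exists (List.flat_map pt L) => -[a p]; apply/List.in_flat_map; exists a; split => //.
rewrite /pt; case: excluded_middle_informative => [q|//].
by left; apply: sval_inj.
Qed.

Lemma finite_option (T : Type) : finite_type T -> finite_type (option T).
Proof.
move=> [l Hl]; exists (None :: List.map Some l) => -[a|]; last by left.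
by right; apply/List.in_map.
Qed.

End Embeddings.

Lemma classC_subS_In (U B : finType) (F : sstr U B -> Prop) (A : ostr U B) (L : list A) :
  age_is F A -> classC F (subS (fun a => List.In a L)).
Proof.
move=> ageA; apply/ageA; split; first exact: finite_In_sig.
by exists (@proj1_sig _ _); apply: oembedding_sval.
Qed.

Section Homogeneous.
Variables (U B : finType) (A : ostr U B).
Hypothesis homA : homogeneous A.

Lemma homogeneous_extend (L : list A) (f : subS (fun a => List.In a L) -> A) :
  oembedding f -> exists t, automorphism t /\ forall d, t (proj1_sig d) = f d.
Proof.
move=> [[finj [fun_ fbin]] flt].
pose g a := if excluded_middle_informative (List.In a L) is left p
            then f (exist _ a p) else a.
have gE x (px : List.In x L) : g x = f (exist _ x px).
  rewrite /g; case: excluded_middle_informative => [p|//].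
  by congr f; apply: sval_inj.
have [t [tA tg]] : exists t, automorphism t /\ forall x, List.In x L -> t x = g x.
  apply: homA => [x y px py | u x px | r x y px py | x y px py].
  - by rewrite (gE x px) (gE y py) => /finj [].
  - by rewrite (gE x px); exact: (fun_ u (exist _ x px)).
  - by rewrite (gE x px) (gE y py); exact: (fbin r (exist _ x px) (exist _ y py)).
  - by rewrite (gE x px) (gE y py); exact: (flt (exist _ x px) (exist _ y py)).
by exists t; split=> // -[x px]; rewrite tg // gE.
Qed.

Lemma homogeneous_embedding_over (L : list A) (S : ostr U B)
    (i : subS (fun a => List.In a L) -> S) (e : S -> A) :
  oembedding i -> oembedding e ->
  exists h : S -> A, oembedding h /\ forall d, h (i d) = proj1_sig d.
Proof.
move=> iemb eemb; have [t [tA tE]] := homogeneous_extend (oembedding_comp iemb eemb).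
have [t' t'K tK'] := tA.1.
exists (t' \o e); split; first exact: oembedding_comp eemb (automorphism_inv tA tK').
by move=> d; move: (tE d) => /= <-; rewrite t'K.
Qed.

End Homogeneous.

Section Clone.
Variables (U B : finType) (S : ostr U B) (z0 : S) (N : S -> Prop).

Definition clone_base (o : option S) : S := if o is Some a then a else z0.

Definition tied (o1 o2 : option S) : Prop :=
  match o1, o2 with
  | None, Some a | Some a, None => N a
  | _, _ => True
  end.

(** The new point [None] is a copy of [z0] that keeps its binary relations only
    with the elements of [N], placed immediately above [z0]. *)
Definition clone : ostr U B :=
  @OStr U B (@SStr U B (option S)
     (fun u o => sun u (clone_base o))
     (fun r o1 o2 => tied o1 o2 /\ sbin r (clone_base o1) (clone_base o2)))
   (fun o1 o2 => olt (clone_base o1) (clone_base o2) \/ (o1 = Some z0 /\ o2 = None)).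

Lemma oembedding_Some : oembedding (Some : S -> clone).
Proof.
split; [split; [exact: Some_inj | split] |] => //.
- by move=> r a b; split=> [|[]].
- by move=> a b; split=> [|[// | [_ //]]]; left.
Qed.

Lemma tied_sym (o1 o2 : option S) : tied o1 o2 -> tied o2 o1.
Proof. by case: o1 o2 => [?|] [?|]. Qed.

Lemma tied_related (o1 o2 : clone) : related o1 o2 -> tied o1 o2.
Proof.
case=> [-> | [r [[] // | [/tied_sym] //]]].
by case: o2.
Qed.

Lemma clone_base_inj_tied (o1 o2 : option S) :
  ~ N z0 -> tied o1 o2 -> clone_base o1 = clone_base o2 -> o1 = o2.
Proof.
move=> Nz0; case: o1 o2 => [a|] [b|] //= Nab E.
- by rewrite E.
- by case: Nz0; rewrite -E.
- by case: Nz0; rewrite E.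
Qed.

Lemma clone_order : strict_total_order (@olt U B S) -> strict_total_order (@olt U B clone).
Proof.
move=> [irr [tr tot]]; split; [|split].
- by move=> o [/irr | [-> ]].
- move=> o1 o2 o3 [lt12 | [-> ->]] [lt23 | [E ->]] //; left.
  + exact: tr lt12 lt23.
  + by rewrite E in lt12.
  + exact: lt23.
- move=> o1 o2 ne; case: (classic (clone_base o1 = clone_base o2)) => [E|/tot [] lt];
    [|by left; left | by right; left].
  move: ne E; case: o1 => [a|]; case: o2 => [b|] //= ne E.
  + by case: ne; rewrite E.
  + by left; right; rewrite E.
  + by right; right; rewrite E.
Qed.

(** Free amalgamation: a fully related structure cannot use both [z0] and its
    copy, which are unrelated, so it already embeds into [S]. *)
Lemma clone_Forb (F : sstr U B -> Prop) :
  ~ N z0 -> (forall G, F G -> forall u v : G, related u v) -> Forb F S -> Forb F clone.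
Proof.
move=> Nz0 Frel [finS forbS]; split; first exact: finite_option.
move=> G FG [f [finj [fun_ fbin]]]; apply: (forbS G FG).
have tiedf u v : tied (f u) (f v).
  case: (Frel G FG u v) => [-> | [r [/fbin [] // | /fbin [/tied_sym] //]]].
  by case: (f v).
exists (clone_base \o f); split; [|split] => /=.
- by move=> u v /(clone_base_inj_tied Nz0 (tiedf u v)) /finj.
- by move=> u x; rewrite fun_.
- by move=> r x y; rewrite fbin; split=> [[]|] //; split.
Qed.

Lemma clone_classC (F : sstr U B -> Prop) :
  ~ N z0 -> (forall G, F G -> forall u v : G, related u v) ->
  classC F S -> classC F clone.
Proof.
move=> Nz0 Frel [forbS ordS].
by split; [exact: clone_Forb | exact: clone_order].
Qed.

Definition swap_in (T : Type) (j : T -> S) (t : T) : clone :=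
  if excluded_middle_informative (j t = z0) then None else Some (j t).

Lemma swap_in_z0 (T : Type) (j : T -> S) (t : T) : j t = z0 -> swap_in j t = None.
Proof. by rewrite /swap_in; case: (excluded_middle_informative _). Qed.

Lemma swap_in_neq (T : Type) (j : T -> S) (t : T) : j t <> z0 -> swap_in j t = Some (j t).
Proof. by rewrite /swap_in; case: (excluded_middle_informative _). Qed.

Lemma oembedding_swap_in (T : ostr U B) (j : T -> S) :
  oembedding j -> (forall t, j t = z0 \/ N (j t)) -> oembedding (swap_in j).
Proof.
move=> [[jinj [jun jbin]] jlt] jN.
have swapP t : j t = z0 /\ swap_in j t = None \/ N (j t) /\ swap_in j t = Some (j t) /\ j t <> z0.
  case: (classic (j t = z0)) => [jz | ne]; [by left; rewrite swap_in_z0 | right].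
  by rewrite swap_in_neq //; case: (jN t).
have base_swap t : clone_base (swap_in j t) = j t.
  by case: (swapP t) => [[-> ->] | [_ [-> _]]].
have tied_swap t1 t2 : tied (swap_in j t1) (swap_in j t2).
  by case: (swapP t1) => [[_ ->] | [N1 [-> _]]]; case: (swapP t2) => [[_ ->] | [N2 [-> _]]].
have swap_neq t : swap_in j t <> Some z0.
  by case: (swapP t) => [[_ ->] | [_ [-> ne] []]].
split; [split; [|split] |].
- by move=> t1 t2 /(f_equal clone_base); rewrite !base_swap => /jinj.
- by move=> u t /=; rewrite base_swap.
- move=> r t1 t2 /=; rewrite !base_swap jbin.
  by split=> [|[]] // ?; split=> //; apply: tied_swap.
- move=> t1 t2 /=; rewrite !base_swap jlt.
  by split=> [|[|[/swap_neq]]]; [left | |].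
Qed.

End Clone.

Theorem mainTheorem10 (U B : finType) (F : sstr U B -> Prop) (A : ostr U B) :
  (forall G : sstr U B, F G -> finite_type G /\ forall u v : G, related u v) ->
  (forall S : sstr U B, Forb F S -> irreflexive_str S) ->
  fraisse_limit F A ->
  forall (X Y : list A) (z : A),
    (forall x, List.In x X -> ~ List.In x Y) ->
    ~ List.In z X -> ~ List.In z Y ->
    exists tau : A -> A,
      automorphism tau /\
      (forall x, List.In x X -> tau x = x) /\
      (forall y, List.In y Y -> ~ related (S := A) (tau z) y) /\
      ~ related (S := A) (tau z) z /\
      olt z (tau z).
Proof.
move=> Frel _ [_ [homA ageA]] X Y z XY zX zY.
pose D := z :: X ++ Y.
pose z0 : subS (fun a => List.In a D) := exist _ z (or_introl erefl).
pose N (d : subS (fun a => List.In a D)) := List.In (proj1_sig d) X.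
have [_ [e eemb]] : finite_type (clone z0 N) /\ oembeds (clone z0 N) A.
  apply/ageA; apply: clone_classC => //; last exact: classC_subS_In.
  by move=> G /Frel [].
have [h [hemb hE]] := homogeneous_embedding_over homA (oembedding_Some z0 N) eemb.
have h_unrelated d : related (h None) (proj1_sig d) -> N d.
  by rewrite -hE => /(sembedding_related hemb.1) /tied_related.
have XD x : List.In x (z :: X) -> List.In x D.
  by case=> [<-|xX]; [left | right; apply/List.in_or_app; left].
pose j (a : subS (fun a => List.In a (z :: X))) : subS (fun a => List.In a D) :=
  exist _ (proj1_sig a) (XD _ (proj2_sig a)).
have jN a : j a = z0 \/ N (j a).
  by case: a => x [zx|xX]; [left; apply: sval_inj | right].
have [tau [tauA tauE]] := homogeneous_extend homA
  (oembedding_comp (oembedding_swap_in (oembedding_subS_incl XD) jN) hemb).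
have tauz : tau z = h None.
  by rewrite (tauE (exist _ z (or_introl erefl))) /= swap_in_z0 //; apply: sval_inj.
exists tau; split=> //; split; [|split; [|split]].
- move=> x xX; rewrite (tauE (exist _ x (or_intror xX))) /= swap_in_neq ?hE //.
  by move=> /(f_equal (@proj1_sig _ _)) /= xz; case: zX; rewrite -xz.
- move=> y yY; rewrite tauz.
  have yD : List.In y D by right; apply/List.in_or_app; right.
  by move/(h_unrelated (exist _ y yD)) => /(XY y) /(_ yY).
- by rewrite tauz; move/(h_unrelated z0).
- by rewrite tauz; move: (proj1 (hemb.2 (Some z0) None)); rewrite hE; apply; right.
Qed.
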